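(* Let $K$ be a field of characteristic $\neq2$ with involution $a\mapsto\bar a$ (possibly the identity), and let $p(x)\in K[x]$ be an irreducible polynomial with $p(x)=p^\vee(x)$ of degree $2r$ or $2r+1$. Consider the field $K(\kappa)=K[x]/p(x)K[x]$ ($\kappa$ the class of $x$) with involution $f(\kappa)^\circ=\bar f(\kappa^{-1})$. Then every element $c\in K(\kappa)$ with $c^\circ=c$ is uniquely representable in the form $q(\kappa)$, where $q(x)=\bar a_rx^{-r}+\dots+\bar a_1x^{-1}+a_0+a_1x+\dots+a_rx^r$ with $a_0=\bar a_0$, $a_1,\dots,a_r\in K$, and, when $\deg p=2r$: (a) $a_r=0$ if the involution on $K$ is the identity; (b) $a_r=\bar a_r$ if the involution on $K$ is nonidentity and $p(0)\ne1$; (c) $a_r=-\bar a_r$ if the involution on $K$ is nonidentity and $p(0)=1$.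
   Context: For $f(x)=a_0x^n+\dots+a_n\in K[x]$: $\bar f(x)=\bar a_0x^n+\dots+\bar a_n$, and if $a_n\ne0$, $f^\vee(x)=\bar a_n^{-1}(\bar a_nx^n+\dots+\bar a_1x+\bar a_0)$. The involution $f(\kappa)^\circ=\bar f(\kappa^{-1})$ is well defined because $p=p^\vee$. *)

From HB Require Import structures.
From mathcomp Require Import all_boot all_order all_algebra.
Set Implicit Arguments. Unset Strict Implicit. Unset Printing Implicit Defensive.
Import GRing.Theory.
Local Open Scope ring_scope.

(* f^vee(x) = conj(f(0))^-1 * (conj a_n x^n + ... + conj a_1 x + conj a_0)
   where f(x) = a_0 x^n + ... + a_n, i.e. the coefficient of x^i in the
   bracket is the conjugate of the coefficient of x^(n-i) in f. *)
Definition pvee (K : fieldType) (conj : K -> K) (f : {poly K}) : {poly K} :=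
  (conj f`_0)^-1 *: \poly_(i < size f) conj f`_((size f).-1 - i).

Definition qc (K : fieldType) (p : {poly K}) (a : K) : {poly %/ p} :=
  in_qpoly p a%:P.

Definition kappa (K : fieldType) (p : {poly K}) : {poly %/ p} := in_qpoly p 'X.

Definition qeval (K : fieldType) (p : {poly K}) (f : {poly K}) (y : {poly %/ p})
  : {poly %/ p} := (map_poly (qc p) f).[y].

(* the involution  f(kappa)^o = fbar(kappa^-1)  on K(kappa) = K[x]/(p);
   c is represented by the polynomial (c : {poly K}) with c = c(kappa). *)
Definition qinvol (K : fieldType) (conj : K -> K) (p : {poly K})
  (c : {poly %/ p}) : {poly %/ p} :=
  qeval (map_poly conj (c : {poly K})) (kappa p)^-1.

Definition laurent_sym (K : fieldType) (conj : K -> K) (p : {poly K}) (r : nat)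
  (a : {ffun 'I_r.+1 -> K}) : {poly %/ p} :=
  qc p (a ord0) +
  \sum_(i < r.+1 | i != ord0)
     (qc p (a i) * kappa p ^+ i + qc p (conj (a i)) * (kappa p ^+ i)^-1).

(* Multiplying by kappa^r turns q(kappa) into the class of a polynomial G of
   degree at most 2r with conj G_(2r-j) = G_j, whose upper half of
   coefficients is a_0, ..., a_r.  Because p = p^vee, f |-> fbar(kappa^-1) is
   well defined on K(kappa), and the conjugate reversal x^N fbar(1/x) of f
   represents fbar(kappa^-1) kappa^N; so when c^o = c, the average of the
   reduction of c x^r modulo p and of its conjugate reversal of width 2r is
   such a G.  Two such G differ by a multiple of p of degree at most 2r, i.e.
   by l p, so l = 0 unless deg p = 2r, and then conj l = l p(0); conditions
   (a)-(c) on a_r remove exactly this freedom (for the trivial involution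
   p(0) = 1, since p(0) = -1 would make p antipalindromic and p(1) = 0). *)

From HB Require Import structures.
From mathcomp Require Import all_boot all_order all_algebra.
From mathcomp Require Import ring.
From Stdlib Require Import Classical.
Set Implicit Arguments. Unset Strict Implicit. Unset Printing Implicit Defensive.
Import GRing.Theory.
Local Open Scope ring_scope.

Section ConjRev.
Variables (K : fieldType) (conj : {rmorphism K -> K}).
Implicit Types f g G : {poly K}.

(* x^N fbar(x^-1) when size f <= N.+1; thus pvee conj f is
   (conj f`_0)^-1 *: conj_rev (size f).-1 f. *)
Definition conj_rev N f : {poly K} := \poly_(i < N.+1) conj f`_(N - i).

Lemma coef_conj_rev N f i :
  (conj_rev N f)`_i = if (i <= N)%N then conj f`_(N - i) else 0.
Proof. by rewrite coef_poly ltnS. Qed.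

Lemma conj_revD N f g : conj_rev N (f + g) = conj_rev N f + conj_rev N g.
Proof.
apply/polyP => i; rewrite coefD !coef_conj_rev coefD rmorphD.
by case: ifP; rewrite ?addr0.
Qed.

Lemma conj_revZ N a f : conj_rev N (a *: f) = conj a *: conj_rev N f.
Proof.
apply/polyP => i; rewrite coefZ !coef_conj_rev coefZ rmorphM.
by case: ifP; rewrite ?mulr0.
Qed.

Lemma conj_revK N f : involutive conj -> (size f <= N.+1)%N ->
  conj_rev N (conj_rev N f) = f.
Proof.
move=> conjK size_f; apply/polyP => i; rewrite !coef_conj_rev.
case: leqP => [le_iN | lt_Ni]; first by rewrite leq_subr subKn // conjK.
by rewrite nth_default // (leq_trans size_f lt_Ni).
Qed.

Lemma horner_conj_rev1 N f : (size f <= N.+1)%N -> (conj_rev N f).[1] = conj f.[1].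
Proof.
move=> size_f; rewrite (horner_coef_wide _ (size_poly _ _)).
rewrite (horner_coef_wide _ size_f) rmorph_sum (reindex_inj rev_ord_inj).
apply: eq_bigr => i _ /=; have le_iN : (i <= N)%N by rewrite -ltnS.
by rewrite coef_conj_rev subSS leq_subr subKn // !expr1n !mulr1.
Qed.

Section LaurentPoly.
Variable r : nat.
Implicit Type a : {ffun 'I_r.+1 -> K}.

(* x^r q(x) for the Laurent polynomial q of the statement *)
Definition laurent_poly a : {poly K} :=
  \poly_(j < (2 * r).+1)
    (if (r <= j)%N then a (inord (j - r)) else conj (a (inord (r - j)))).

Definition half_coefs G : {ffun 'I_r.+1 -> K} := [ffun i : 'I_r.+1 => G`_(r + i)].

Lemma coef_laurent_poly_ge a (i : 'I_r.+1) : (laurent_poly a)`_(r + i) = a i.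
Proof.
rewrite coef_poly leq_addr addKn inord_val mul2n -addnn ltnS leq_add2l.
by rewrite -ltnS ltn_ord.
Qed.

Lemma coef_laurent_poly_lt a j : (j < r)%N ->
  (laurent_poly a)`_j = conj (a (inord (r - j))).
Proof.
move=> lt_jr; rewrite coef_poly [(r <= j)%N]leqNgt lt_jr /= ifT //.
by rewrite ltnS (leq_trans (ltnW lt_jr)) // mul2n -addnn leq_addr.
Qed.

Lemma laurent_poly_half G : conj_rev (2 * r) G = G -> laurent_poly (half_coefs G) = G.
Proof.
move=> G_rev; apply/polyP => j; rewrite coef_poly.
have r2 : (2 * r = r + r)%N by rewrite mul2n addnn.
case: ltnP => [le_j2r | lt_2rj]; last by rewrite -G_rev coef_conj_rev leqNgt lt_2rj.
rewrite ltnS in le_j2r.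
have G_j : G`_j = conj G`_(2 * r - j) by rewrite -{1}G_rev coef_conj_rev le_j2r.
case: leqP => [le_rj | lt_jr]; rewrite ffunE inordK.
- by rewrite subnKC.
- by rewrite ltnS leq_subLR -r2.
- by rewrite G_j r2 addnBA // ltnW.
- by rewrite ltnS leq_subr.
Qed.

Lemma conj_half_coefs0 G : conj_rev (2 * r) G = G ->
  conj (half_coefs G ord0) = half_coefs G ord0.
Proof.
move=> G_rev; rewrite ffunE addn0 -[in RHS]G_rev coef_conj_rev.
by rewrite mul2n -addnn leq_addl addnK.
Qed.

End LaurentPoly.
End ConjRev.

Section TopNormal.
Variables (K : fieldType) (conj : {rmorphism K -> K}).
Hypothesis char_neq2 : (2%:R : K) != 0.

(* Conditions (a), (b), (c) of the statement, with u standing for p(0). *)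
Definition top_normal (u x : K) : Prop :=
  [/\ (forall y : K, conj y = y) -> x = 0,
      (exists y : K, conj y != y) -> u != 1 -> x = conj x &
      (exists y : K, conj y != y) -> u = 1 -> x = - conj x].

Lemma top_normal_inj u x1 x2 : top_normal u x1 -> top_normal u x2 ->
  conj (x1 - x2) = (x1 - x2) * u -> x1 = x2.
Proof.
move=> [id1 fix1 anti1] [id2 fix2 anti2] conj_x12; apply/eqP; rewrite -subr_eq0.
have [conj_id | /not_all_ex_not[y /eqP y_moved]] := classic (forall y, conj y = y).
  by rewrite id1 // id2 // subrr.
have moved : exists y, conj y != y by exists y.
have [u1 | u_neq1] := eqVneq u 1.
  have conj_x1 : conj x1 = - x1 by rewrite {2}(anti1 moved u1) opprK.
  have conj_x2 : conj x2 = - x2 by rewrite {2}(anti2 moved u1) opprK.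
  have : (x1 - x2) * 2%:R = (x1 - x2) - (conj x1 - conj x2).
    by rewrite conj_x1 conj_x2; ring.
  rewrite -rmorphB conj_x12 u1 mulr1 subrr => /eqP.
  by rewrite mulf_eq0 (negPf char_neq2) orbF.
move: conj_x12; rewrite rmorphB -(fix1 moved u_neq1) -(fix2 moved u_neq1) => /eqP.
rewrite -subr_eq0 -{1}(mulr1 (x1 - x2)) -mulrBr mulf_eq0 subr_eq0.
by rewrite subr_eq0 [1 == u]eq_sym (negPf u_neq1) orbF.
Qed.

Hypothesis conjK : involutive conj.

Lemma top_normal_exists u b : u * conj u = 1 ->
  ((forall y : K, conj y = y) -> u = 1) ->
  exists2 l, conj l = l * u & top_normal u (b + l).
Proof.
move=> u_conj id_u1; have conj2 : conj 2^-1 = 2^-1 by rewrite fmorphV rmorph_nat.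
have [u1 | u_neq1] := eqVneq u 1.
  (* then b + l = (b - conj b) / 2 is anti-invariant *)
  exists (- (2^-1 * (b + conj b))).
    by rewrite u1 mulr1 rmorphN rmorphM conj2 rmorphD conjK addrC.
  split=> [conj_id | _ /eqP // | _ _]; first by rewrite conj_id; field.
  by rewrite rmorphD rmorphN rmorphM conj2 rmorphD conjK; field.
have u_neq0 : u != 0.
  by apply: contra_eq_neq u_conj => ->; rewrite mul0r eq_sym oner_eq0.
have conj_u : conj u = u^-1 by rewrite -[conj u](mulKf u_neq0) u_conj mulr1.
have u1_neq0 : u - 1 != 0 by rewrite subr_eq0.
(* the solution of conj (b + l) = b + l with conj l = l * u *)
exists ((b - conj b) / (u - 1)).
  rewrite rmorphM fmorphV !rmorphB rmorph1 conjK conj_u; field.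
  by rewrite u1_neq0 u_neq0 mulN1r subr_eq0 eq_sym u_neq1.
split=> [/id_u1/eqP | _ _ | _ /eqP]; rewrite ?(negPf u_neq1) //.
rewrite rmorphD rmorphM fmorphV !rmorphB rmorph1 conjK conj_u; field.
by rewrite u1_neq0 u_neq0 mulN1r subr_eq0 eq_sym u_neq1.
Qed.

End TopNormal.

Lemma dvdp_size_leq_scale (K : fieldType) (p d : {poly K}) : p \is monic ->
  (size d <= size p)%N -> p %| d -> d = d`_(size p).-1 *: p.
Proof.
move=> p_monic size_d_le p_dvd_d; have [-> | d_neq0] := eqVneq d 0.
  by rewrite coef0 scale0r.
have size_d : size d = size p by apply/eqP; rewrite eqn_leq size_d_le dvdp_leq.
have p_eqp_d : p %= d by rewrite -dvdp_size_eqp // size_d.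
by have := eqp_eq p_eqp_d; rewrite (monicP p_monic) scale1r -size_d.
Qed.

Section Quotient.
Variables (K : fieldType) (h : {poly K}).
Implicit Types f g : {poly K}.

Lemma in_qpoly_val (c : {poly %/ h}) : in_qpoly h c = c.
Proof. by apply: val_inj; apply: in_qpoly_small; apply: size_mk_monic. Qed.

Lemma qevalE g (y : {poly %/ h}) : qeval g y = (map_poly (in_qpoly h \o polyC) g).[y].
Proof. by []. Qed.

Lemma in_qpoly_qeval f : in_qpoly h f = qeval f (kappa h).
Proof. by rewrite qevalE map_poly_comp horner_map /= -/(comp_poly 'X f) comp_polyXr. Qed.

Lemma in_qpoly_expand N f : (size f <= N)%N ->
  in_qpoly h f = \sum_(i < N) qc h f`_i * kappa h ^+ i.
Proof.
move=> size_f; rewrite in_qpoly_qeval qevalE (horner_coef_wide _ (n := N)).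
  by apply: eq_bigr => i _; rewrite coef_map.
by rewrite size_map_poly.
Qed.

Hypothesis h_mk : mk_monic h = h.

Lemma in_qpolyE f : in_qpoly h f = f %% h :> {poly K}.
Proof.
have h_monic : h \is monic by rewrite -h_mk monic_mk_monic.
by rewrite /= h_mk Pdiv.IdomainMonic.modpE.
Qed.

Lemma in_qpoly_eq0 f : (in_qpoly h f == 0) = (h %| f).
Proof.
apply/eqP/modp_eq0P; rewrite -in_qpolyE; first by move=> ->.
by move=> f_h0; apply: val_inj.
Qed.

Lemma in_qpoly_mod f : in_qpoly h (f %% h) = in_qpoly h f.
Proof. by apply: val_inj; rewrite [val _]in_qpolyE [val _]in_qpolyE modp_id. Qed.

Lemma kappa_unit : h`_0 != 0 -> kappa h \is a GRing.unit.
Proof.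
move=> h0_neq0; rewrite unfold_in /= -[Pdiv.CommonRing.rmodp _ _]/(kappa h : {poly K}).
rewrite in_qpolyE h_mk coprimep_modr -['X](subr0) -polyC0 coprimep_XsubC.
by rewrite rootE horner_coef0.
Qed.

End Quotient.

Section SelfReciprocal.
Variables (K : fieldType) (conj : {rmorphism K -> K}) (p : {poly K}).
Hypotheses (p0_neq0 : p`_0 != 0) (p_self : p = pvee conj p).
Implicit Types f g G : {poly K}.

Local Notation n := (size p).-1.
Local Notation conj_rev := (conj_rev conj).
Local Notation k := (kappa p).

Lemma size_selfrec : size p = n.+1.
Proof.
by rewrite prednK // size_poly_gt0; apply: contra_neq p0_neq0 => ->; rewrite coef0.
Qed.

Lemma conj_rev_selfrec : conj_rev n p = conj p`_0 *: p.
Proof.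
have conj_p0_neq0 : conj p`_0 != 0 by rewrite fmorph_eq0.
transitivity (conj p`_0 *: pvee conj p); last by rewrite -p_self.
by rewrite /pvee scalerA mulfV // scale1r /conj_rev -size_selfrec.
Qed.

Lemma monic_selfrec : p \is monic.
Proof.
have := congr1 (fun q : {poly K} => q`_n) conj_rev_selfrec.
rewrite coef_conj_rev leqnn subnn coefZ -{1}[conj p`_0]mulr1 => /mulfI.
by rewrite monicE /lead_coef fmorph_eq0 p0_neq0 => /(_ isT) <-.
Qed.

Lemma selfrec_top_coef : p`_n = 1.
Proof. exact: monicP monic_selfrec. Qed.

Lemma selfrec_p0_conj : p`_0 * conj p`_0 = 1.
Proof.
have := congr1 (fun q : {poly K} => q`_0) conj_rev_selfrec.
by rewrite coef_conj_rev subn0 coefZ selfrec_top_coef rmorph1 mulrC.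
Qed.

Lemma conj_rev_scale_selfrec l : conj l = l * p`_0 -> conj_rev n (l *: p) = l *: p.
Proof.
move=> conj_l; rewrite conj_revZ conj_rev_selfrec scalerA conj_l -mulrA.
by rewrite selfrec_p0_conj mulr1.
Qed.

Hypothesis p_irr : irreducible_poly p.

Lemma size_selfrec_gt1 : (1 < size p)%N.
Proof. by case: p_irr. Qed.

Lemma mk_monic_selfrec : mk_monic p = p.
Proof. by rewrite /mk_monic size_selfrec_gt1 monic_selfrec. Qed.

Local Notation k_unit := (kappa_unit mk_monic_selfrec p0_neq0).

(* The involution of K(kappa), extended to K[x]: qinvol conj c = qinvolp c. *)
Definition qinvolp f : {poly %/ p} := qeval (map_poly conj f) k^-1.

Lemma qinvolpD f g : qinvolp (f + g) = qinvolp f + qinvolp g.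
Proof. by rewrite /qinvolp !qevalE !rmorphD hornerD. Qed.

Lemma qinvolpM f g : qinvolp (f * g) = qinvolp f * qinvolp g.
Proof. by rewrite /qinvolp !qevalE !rmorphM hornerM. Qed.

Lemma qinvolpXn j : qinvolp 'X^j = k^-1 ^+ j.
Proof. by rewrite /qinvolp qevalE !rmorphXn /= !map_polyX hornerXn. Qed.

Lemma qinvolp_conj_rev N f : (size f <= N.+1)%N ->
  qinvolp f * k ^+ N = in_qpoly p (conj_rev N f).
Proof.
move=> size_f; rewrite (in_qpoly_expand p (size_poly _ _)) /qinvolp qevalE.
rewrite (horner_coef_wide _ (n := N.+1)) ?size_map_poly //.
rewrite mulr_suml [RHS](reindex_inj rev_ord_inj); apply: eq_bigr => i _ /=.
have le_iN : (i <= N)%N by rewrite -ltnS.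
rewrite !coef_map /= coef_conj_rev subSS leq_subr subKn // -mulrA exprVn.
by rewrite [_^-1 * _]mulrC -exprB ?k_unit.
Qed.

Lemma qinvolp_selfrec : qinvolp p = 0.
Proof.
have := qinvolp_conj_rev (eq_leq size_selfrec); rewrite conj_rev_selfrec.
rewrite (eqP (_ : in_qpoly p _ == 0)); last first.
  by rewrite (in_qpoly_eq0 mk_monic_selfrec) dvdpZr ?fmorph_eq0.
by move/(canRL (mulrK (unitrX n k_unit))); rewrite mul0r.
Qed.

Lemma qinvolp_mod f : qinvolp (f %% p) = qinvolp f.
Proof.
by rewrite [in RHS](divp_eq f p) qinvolpD qinvolpM qinvolp_selfrec mulr0 add0r.
Qed.

Lemma laurent_sym_mulXr r (a : {ffun 'I_r.+1 -> K}) :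
  laurent_sym conj p a * k ^+ r = in_qpoly p (laurent_poly conj a).
Proof.
have size_L : (size (laurent_poly conj a) <= r + r.+1)%N.
  by rewrite addnS addnn -mul2n size_poly.
rewrite (in_qpoly_expand p size_L) big_split_ord /= big_ord_recl.
rewrite (coef_laurent_poly_ge conj a ord0) /laurent_sym mulrDl mulr_suml.
rewrite big_mkcond big_ord_recl /= add0r addn0 addrCA; congr (_ + _).
rewrite [X in _ = X + _](reindex_inj rev_ord_inj) -big_split /=.
apply: eq_bigr => i _; have le_i1r : (i.+1 <= r)%N := ltn_ord i.
have lift_i : lift ord0 i = inord i.+1 by apply: val_inj; rewrite /= inordK.
rewrite (coef_laurent_poly_ge conj a (lift ord0 i)) coef_laurent_poly_lt; last first.
  by rewrite ltn_subrL (leq_trans _ le_i1r).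
rewrite subKn // -lift_i /bump /= add1n mulrDl addrC; congr (_ + _).
  by rewrite -mulrA -exprD addnC.
by rewrite -mulrA [_^-1 * _]mulrC -exprB ?k_unit.
Qed.

Lemma laurent_sym_half r G c : conj_rev (2 * r) G = G ->
  in_qpoly p G = c * k ^+ r -> laurent_sym conj p (half_coefs r G) = c.
Proof.
move=> G_rev G_c; apply: (mulIr (unitrX r k_unit)).
by rewrite laurent_sym_mulXr laurent_poly_half.
Qed.

Hypothesis char_neq2 : (2%:R : K) != 0.

Lemma conj_id_selfrec_p0 : (forall x, conj x = x) -> ~~ odd n -> p`_0 = 1.
Proof.
move=> conj_id even_n; have := selfrec_p0_conj; rewrite conj_id -expr2 => /eqP.
rewrite sqrf_eq1 => /orP[/eqP // | /eqP p0_m1].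
have root_p1 : root p 1.
  have := horner_conj_rev1 conj (eq_leq size_selfrec).
  rewrite conj_rev_selfrec hornerZ p0_m1 !conj_id mulN1r => /eqP.
  rewrite eq_sym -addr_eq0 -mulr2n -mulr_natr mulf_eq0 (negPf char_neq2) orbF.
  by rewrite rootE.
have dvd_p : 'X - 1%:P %| p by rewrite dvdp_XsubCl.
have [/eqp_size | /eqp_size] := irredp_XsubCP p_irr dvd_p.
  by rewrite size_XsubC size_poly1.
by rewrite size_XsubC => size_p; rewrite -size_p in even_n.
Qed.

Definition laurent_rep r c (a : {ffun 'I_r.+1 -> K}) : Prop :=
  [/\ laurent_sym conj p a = c, conj (a ord0) = a ord0 &
      n = (2 * r)%N -> top_normal conj p`_0 (a ord_max)].

Lemma laurent_rep_inj r c (a1 a2 : {ffun 'I_r.+1 -> K}) : (2 * r <= n)%N ->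
  laurent_rep c a1 -> laurent_rep c a2 -> a1 = a2.
Proof.
move=> le_2r_n [a1_c _ top1] [a2_c _ top2].
set D := laurent_poly conj a1 - laurent_poly conj a2.
have p_dvd_D : p %| D.
  rewrite -(in_qpoly_eq0 mk_monic_selfrec) /D rmorphB /=.
  by rewrite -!laurent_sym_mulXr a1_c a2_c subrr.
have size_D : (size D <= (2 * r).+1)%N.
  by rewrite (leq_trans (size_polyD _ _)) // size_polyN geq_max !size_poly.
have D_scale : D = D`_n *: p.
  apply: dvdp_size_leq_scale monic_selfrec (leq_trans size_D _) p_dvd_D.
  by rewrite size_selfrec.
suff D_n0 : D`_n = 0.
  apply/ffunP => i; apply/eqP; rewrite -subr_eq0 -(coef_laurent_poly_ge conj a1).
  by rewrite -(coef_laurent_poly_ge conj a2) -coefB -/D D_scale D_n0 scale0r coef0.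
move: le_2r_n; rewrite leq_eqVlt => /orP[/eqP r2_n | lt_2r_n]; last first.
  by rewrite nth_default // (leq_trans size_D).
have r_gt0 : (0 < r)%N.
  by move: size_selfrec_gt1; rewrite size_selfrec ltnS -r2_n muln_gt0.
have D_top : D`_n = a1 ord_max - a2 ord_max.
  have r2 : (2 * r = r + @ord_max r)%N by rewrite mul2n addnn.
  by rewrite coefB -r2_n r2 !coef_laurent_poly_ge.
have D_bottom : D`_0 = conj D`_n.
  rewrite D_top coefB !coef_laurent_poly_lt // subn0 rmorphB.
  by rewrite -[r in inord r]/(nat_of_ord (@ord_max r)) inord_val.
apply/eqP; rewrite D_top subr_eq0; apply/eqP.
apply: top_normal_inj (top1 (esym r2_n)) (top2 (esym r2_n)) _ => //.
by rewrite -D_top -D_bottom {1}D_scale coefZ.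
Qed.

Lemma laurent_rep_half r c G : conj_rev (2 * r) G = G ->
  in_qpoly p G = c * k ^+ r -> (n = (2 * r)%N -> top_normal conj p`_0 G`_n) ->
  laurent_rep c (half_coefs r G).
Proof.
move=> G_rev G_c G_top; split; [exact: laurent_sym_half | exact: conj_half_coefs0 |].
by move=> r2; rewrite ffunE -[(r + _)%N]/(r + r)%N addnn -mul2n -r2; apply: G_top.
Qed.

Hypothesis conjK : involutive conj.

Lemma conj_rev_rep_exists r c : (n <= (2 * r).+1)%N -> qinvol conj c = c ->
  exists2 H, conj_rev (2 * r) H = H & in_qpoly p H = c * k ^+ r.
Proof.
move=> le_n_2r1 c_sym; set E := ((c : {poly K}) * 'X^r) %% p.
have size_E : (size E <= (2 * r).+1)%N.
  have : (size E < size p)%N by rewrite ltn_modp irredp_neq0.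
  by rewrite size_selfrec ltnS => /leq_trans; apply.
have E_c : in_qpoly p E = c * k ^+ r.
  by rewrite (in_qpoly_mod mk_monic_selfrec) rmorphM rmorphXn /= in_qpoly_val.
have revE_c : in_qpoly p (conj_rev (2 * r) E) = c * k ^+ r.
  have le_r_2r : (r <= 2 * r)%N by rewrite mul2n -addnn leq_addr.
  rewrite -qinvolp_conj_rev // qinvolp_mod qinvolpM qinvolpXn [qinvolp _]c_sym.
  rewrite -mulrA exprVn [_^-1 * _]mulrC -exprB ?k_unit //.
  by rewrite mul2n -addnn addnK.
exists (2^-1 *: (E + conj_rev (2 * r) E)).
  by rewrite conj_revZ conj_revD conj_revK // fmorphV rmorph_nat addrC.
rewrite linearZ rmorphD /= E_c revE_c -mulr2n -scaler_nat scalerA mulVf //.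
by rewrite scale1r.
Qed.

Lemma laurent_rep_exists r c : n = (2 * r)%N \/ n = (2 * r).+1 ->
  qinvol conj c = c -> exists a : {ffun 'I_r.+1 -> K}, laurent_rep c a.
Proof.
move=> deg_p c_sym.
have [H H_rev H_c] : exists2 H, conj_rev (2 * r) H = H & in_qpoly p H = c * k ^+ r.
  by apply: conj_rev_rep_exists => //; case: deg_p => ->.
case: deg_p => [n_r2 | n_r2S]; last first.
  exists (half_coefs r H); apply: laurent_rep_half => // n_r2.
  by move: n_r2S; rewrite n_r2 => /eqP; rewrite ltn_eqF.
have even_n : ~~ odd n by rewrite n_r2 mul2n odd_double.
have [l l_conj l_top] := top_normal_exists char_neq2 conjK H`_n selfrec_p0_conj
  (fun conj_id => conj_id_selfrec_p0 conj_id even_n).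
exists (half_coefs r (H + l *: p)); apply: laurent_rep_half.
- by rewrite conj_revD H_rev -n_r2 conj_rev_scale_selfrec.
- have pQ0 : in_qpoly p p = 0 by apply/eqP; rewrite (in_qpoly_eq0 mk_monic_selfrec).
  by rewrite rmorphD /= in_qpolyZ pQ0 scaler0 addr0 H_c.
- by rewrite coefD coefZ selfrec_top_coef mulr1.
Qed.

End SelfReciprocal.

Theorem lemma7 (K : fieldType) (conj : {rmorphism K -> K})
  (conj_invol : involutive conj) (char_ne2 : (2%:R : K) != 0)
  (p : {poly K}) (p_irr : irreducible_poly p) (p0_ne0 : p`_0 != 0)
  (p_self : p = pvee conj p) (r : nat)
  (deg_p : (size p).-1 = (2 * r)%N \/ (size p).-1 = (2 * r).+1)
  (c : {poly %/ p}) (c_sym : qinvol conj c = c) :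
  exists! a : {ffun 'I_r.+1 -> K},
    [/\ laurent_sym conj p a = c,
        conj (a ord0) = a ord0 &
        (size p).-1 = (2 * r)%N ->
          [/\ (forall x : K, conj x = x) -> a ord_max = 0,
              (exists x : K, conj x != x) -> p`_0 != 1 -> a ord_max = conj (a ord_max) &
              (exists x : K, conj x != x) -> p`_0 = 1 -> a ord_max = - conj (a ord_max)]].
Proof.
have [a a_rep] := laurent_rep_exists p0_ne0 p_self p_irr char_ne2 conj_invol deg_p c_sym.
exists a; split=> [|b b_rep]; first exact: a_rep.
have le_2r_n : (2 * r <= (size p).-1)%N by case: deg_p => ->.
by apply: (laurent_rep_inj p0_ne0 p_self p_irr char_ne2 le_2r_n a_rep).
Qed.
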